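(* Let $G$ be a graph with a type-2A 1-planar drawing $D$, let $S$ be a vertex-cut of $G$, let $F$ be a component of $G-S$, and let $ab$ be an edge of $F$. If $ab$ is crossed by an edge $xy$ in $D$, then one of the following holds: (a) $x,y\in S$; (b) $x,y\in V(F)$; (c) one of $x,y$ lies in $S$ and the other lies in $V(F)$.
   Context: All drawings are good (no edge crosses itself, two edges cross at most once, adjacent edges do not cross). A drawing is 1-planar if every edge is crossed at most once. If edges $ab$ and $cd$ cross in a 1-planar drawing of $G$, the associated edges of this crossing are the edges of $G[\{a,b,c,d\}]$ other than $ab$ and $cd$. A 1-planar drawing is type-2A if every crossing has at least two associated edges, and every crossing with exactly two associated edges has these two edges disjoint. A vertex-cut is a set $S\subseteq V(G)$ with $G-S$ disconnected. *)

From mathcomp Require Import all_boot.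
From Stdlib Require Import Reals.
Set Implicit Arguments. Unset Strict Implicit. Unset Printing Implicit Defensive.

(* A simple graph: vertex type T (finite), adjacency e : rel T,
   symmetric and irreflexive.  An edge is an unordered pair {u,v} with e u v. *)
Definition simple_graph (T : finType) (e : rel T) : Prop :=
  (forall u v, e u v = e v u) /\ (forall u, ~~ e u u).

Definition point := (R * R)%type.

Definition dist2 (p q : point) : R :=
  ((fst p - fst q) * (fst p - fst q) + (snd p - snd q) * (snd p - snd q))%R.

Definition path_continuous (g : R -> point) : Prop :=
  forall t, (0 <= t <= 1)%R -> forall eps, (0 < eps)%R ->
    exists delta, (0 < delta)%R /\
      forall s, (0 <= s <= 1)%R -> (Rabs (s - t) < delta)%R ->
        (dist2 (g s) (g t) < eps * eps)%R.

(* A drawing: a position for every vertex and, for every ordered pair (u,v),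
   a parametrised curve [0,1] -> R^2 (only meaningful when e u v). *)
Record drawing (T : finType) := Drawing {
  pos : T -> point;
  curve : T -> T -> R -> point
}.

Definition on_interior (T : finType) (D : drawing T) (u v : T) (p : point) : Prop :=
  exists t, (0 < t < 1)%R /\ curve D u v t = p.

Definition same_edge (T : finType) (u v x y : T) : Prop :=
  (u = x /\ v = y) \/ (u = y /\ v = x).

Definition adjacent_edges (T : finType) (u v x y : T) : Prop :=
  u = x \/ u = y \/ v = x \/ v = y.

Definition is_drawing (T : finType) (e : rel T) (D : drawing T) : Prop :=
  injective (pos D) /\
  forall u v, e u v ->
    [/\ path_continuous (curve D u v),
        curve D u v 0%R = pos D u /\
        curve D u v 1%R = pos D v,
        (forall s t, (0 <= s <= 1)%R -> (0 <= t <= 1)%R ->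
            curve D u v s = curve D u v t -> s = t),
        (forall w t, (0 < t < 1)%R -> curve D u v t <> pos D w) &
        (forall t, curve D v u t = curve D u v (1 - t)%R)].

Definition cross (T : finType) (e : rel T) (D : drawing T) (u v x y : T) : Prop :=
  e u v /\ e x y /\ ~ same_edge u v x y /\
  exists p, on_interior D u v p /\ on_interior D x y p.

(* good drawing: adjacent edges do not cross, two edges cross at most once
   (no edge crosses itself is part of is_drawing: arcs are simple). *)
Definition good_drawing (T : finType) (e : rel T) (D : drawing T) : Prop :=
  is_drawing e D /\
  (forall u v x y, e u v -> e x y -> ~ same_edge u v x y ->
      adjacent_edges u v x y ->
      forall p, on_interior D u v p -> on_interior D x y p -> False) /\
  (forall u v x y, e u v -> e x y -> ~ same_edge u v x y ->
      forall p q, on_interior D u v p -> on_interior D x y p ->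
                  on_interior D u v q -> on_interior D x y q -> p = q).

Definition one_planar (T : finType) (e : rel T) (D : drawing T) : Prop :=
  good_drawing e D /\
  forall u v x y x' y', cross e D u v x y -> cross e D u v x' y' ->
    same_edge x y x' y'.

(* number of associated edges of the crossing of ab and cd: edges of
   G[{a,b,c,d}] other than ab, cd (a,b,c,d are distinct in a good drawing,
   so these are among ac, ad, bc, bd). *)
Definition n_assoc (T : finType) (e : rel T) (a b c d : T) : nat :=
  e a c + e a d + e b c + e b d.

Definition type2A (T : finType) (e : rel T) (D : drawing T) : Prop :=
  one_planar e D /\
  forall a b c d, cross e D a b c d ->
    2 <= n_assoc e a b c d /\
    (n_assoc e a b c d = 2 ->
       (e a c && e b d) || (e a d && e b c)).

Definition del_rel (T : finType) (e : rel T) (S : {set T}) : rel T :=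
  [rel u v | [&& e u v, u \notin S & v \notin S]].

Definition vertex_cut (T : finType) (e : rel T) (S : {set T}) : Prop :=
  exists u v, [/\ u \notin S, v \notin S & ~~ connect (del_rel e S) u v].

Definition component_of (T : finType) (e : rel T) (S : {set T}) (F : {set T}) : Prop :=
  exists w, w \notin S /\ F = [set u | (u \notin S) && connect (del_rel e S) w u].

From mathcomp Require Import all_boot.

Set Implicit Arguments. Unset Strict Implicit. Unset Printing Implicit Defensive.

(* An edge crossing ab in a type-2A drawing has each endpoint adjacent to a or
   to b.  A neighbour of a vertex of the component F is in S or in F, so both
   endpoints lie in S or in F. *)

Lemma component_of_adj (T : finType) (e : rel T) (S F : {set T}) (u v : T) :
  component_of e S F -> u \in F -> e u v -> (v \in S) || (v \in F).
Proof.
move=> [w [_ ->]]; rewrite !inE => /andP [uS cwu] euv.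
case vS: (v \in S) => //=; apply: connect_trans cwu (connect1 _).
by rewrite /del_rel /= euv uS vS.
Qed.

(* If x had no neighbour in {a, b}, the at least two associated edges would
   both be incident to y, and so could not be disjoint. *)
Lemma type2A_cross_adj (T : finType) (e : rel T) (D : drawing T) (a b x y : T) :
  type2A e D -> cross e D a b x y -> (e a x || e b x) && (e a y || e b y).
Proof.
move=> [_ H2A] /H2A []; rewrite /n_assoc.
by case: (e a x) (e b x) (e a y) (e b y) => [] [] [] [] // _ /(_ erefl).
Qed.

Theorem proposition1 (T : finType) (e : rel T) (D : drawing T)
    (S F : {set T}) (a b x y : T) :
  simple_graph e ->
  type2A e D ->
  vertex_cut e S ->
  component_of e S F ->
  e a b -> a \in F -> b \in F ->
  cross e D a b x y ->
  (x \in S /\ y \in S) \/ (x \in F /\ y \in F) \/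
  ((x \in S /\ y \in F) \/ (y \in S /\ x \in F)).
Proof.
move=> _ H2A _ HF _ aF bF Hc.
have in_S_or_F z : e a z || e b z -> (z \in S) || (z \in F).
  by case/orP; apply: component_of_adj HF _.
have /andP [/in_S_or_F /orP xSF /in_S_or_F /orP ySF] := type2A_cross_adj H2A Hc.
by case: xSF ySF => xSF [] ySF; tauto.
Qed.
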